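(* Let $Q>0$ and $\Gamma>0$. Let $f$ be a positive random variable with a continuous probability density function, and let $I$ be a nonnegative random variable independent of $f$ with $\mathbb{E}[I]=\Gamma$. For $\epsilon_0\in[0,1)$: <ul> <li>Let $\theta_a\ge 0$ satisfy $\Pr\{f/(1+I)<\theta_a\}=\epsilon_0$, and let $\theta_p\ge0$ satisfy $\Pr\{f/(1+\Gamma)<\theta_p\}=\epsilon_0$.</li> <li>Let $\gamma_a$ be determined by $\mathbb{E}[q^a]=Q$, where $q^a=\frac{\gamma_a(1+I)}{f}\mathbf{1}\left(\frac{f}{1+I}\ge\theta_a\right)$.</li> <li>Let $\gamma_p$ be determined by $\mathbb{E}[q^p]=Q$, where $q^p=\frac{\gamma_p(1+\Gamma)}{f}\mathbf{1}\left(\frac{f}{1+\Gamma}\ge\theta_p\right)$.</li> <li>Set $C^{{\rm OUT},a}_{\rm PR,TCI}(\epsilon_0)=\log(1+\gamma_a)$ and $C^{{\rm OUT},p}_{\rm PR,TCI}(\epsilon_0)=\log(1+\gamma_p)$.</li> </ul> Then $C^{{\rm OUT},a}_{\rm PR,TCI}(\epsilon_0)\geq C^{{\rm OUT},p}_{\rm PR,TCI}(\epsilon_0)$ for all $\epsilon_0$.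
   Context: $\mathbf{1}(\cdot)$ denotes the indicator function. Setting: a primary radio (PR) fading link with channel power gain $f$ and unit noise power. $I$ is the interference power caused by a cognitive radio at the PR receiver, independent of $f$. In the average-interference-power (AIP) case $I$ is random with mean $\Gamma$; in the peak-interference-power (PIP) case the interference equals $\Gamma$ always. The PR uses truncated-channel-inversion (TCI) power control with average power $Q$ and outage probability $\epsilon_0$. It transmits only when the effective gain exceeds the threshold, and inverts the channel to achieve constant received SNR $\gamma_a$ (respectively $\gamma_p$). $\log(1+\gamma)$ is the resulting PR outage capacity. *)

From HB Require Import structures.
From mathcomp Require Import all_boot all_order all_algebra.
From mathcomp Require Import all_classical all_reals all_analysis.
Set Implicit Arguments. Unset Strict Implicit. Unset Printing Implicit Defensive.
Import Order.TTheory GRing.Theory Num.Theory.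
Import numFieldNormedType.Exports.
Local Open Scope classical_set_scope.
Local Open Scope ring_scope.

Definition indep_RV d (T : measurableType d) (R : realType)
  (P : probability T R) (X Y : T -> R) : Prop :=
  forall A B : set R, measurable A -> measurable B ->
    P (X @^-1` A `&` Y @^-1` B) = (P (X @^-1` A) * P (Y @^-1` B))%E.

Definition has_continuous_pdf d (T : measurableType d) (R : realType)
  (P : probability T R) (X : T -> R) : Prop :=
  exists p : R -> R, continuous p /\ (forall x, 0 <= p x) /\
    forall A : set R, measurable A ->
      P (X @^-1` A) = (\int[lebesgue_measure]_(x in A) (p x)%:E)%E.

From HB Require Import structures.
From mathcomp Require Import all_boot all_order all_algebra.
From mathcomp Require Import all_classical all_reals all_analysis.
From mathcomp Require Import measurable_realfun.
Import Order.TTheory GRing.Theory Num.Theory.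
Import numFieldNormedType.Exports.
Local Open Scope classical_set_scope.
Local Open Scope ring_scope.

(* With [Y := (1 + I) / f], the AIP constraint reads [gamma_a E[Y 1_A] = Q]
   for the event [A := {f / (1 + I) >= theta_a} = {Y <= 1 / theta_a}].  Since
   the PIP event [B := {f / (1 + Gamma) >= theta_p}] depends on [f] only,
   independence and [E[I] = Gamma] turn the PIP constraint into
   [gamma_p E[Y 1_B] = Q].  Both events have probability [1 - eps0], and among
   events of a given probability the sublevel set [A] of [Y] minimises
   [E[Y 1_.]]; hence [E[Y 1_A] <= E[Y 1_B]], so [gamma_p <= gamma_a]. *)

Lemma indic_ge0 (T : Type) (R : realType) (A : set T) (x : T) :
  0 <= \1_A x :> R.
Proof. by rewrite indicE ler0n. Qed.

Lemma setC_le_lt {T : Type} {R : realType} (h : T -> R) (c : R) :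
  ~` [set x | c <= h x] = [set x | h x < c].
Proof. by apply/seteqP; split => x /=; rewrite ltNge => /negP. Qed.

Lemma expRNln (R : realType) (z : R) : 0 < z -> expR (- ln z) = z^-1.
Proof. by move=> z0; rewrite expRN lnK. Qed.

Lemma measurable_expRNln (R : realType) :
  measurable_fun [set: R] (fun z => expR (- ln z)).
Proof.
apply: measurableT_comp; first exact: measurable_expR.
by apply: measurableT_comp; [exact: oppr_measurable | exact: measurable_ln].
Qed.

Section measurable_real.
Context {d} {T : measurableType d} {R : realType}.
Implicit Types h : T -> R.

Lemma measurable_funV_gt0 h : measurable_fun setT h -> (forall x, 0 < h x) ->
  measurable_fun setT (fun x => (h x)^-1).
Proof.
move=> mh h_gt0; under eq_fun do rewrite -expRNln //.
exact: (measurableT_comp (measurable_expRNln R) mh).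
Qed.

Lemma measurable_ge_set h (c : R) : measurable_fun setT h ->
  measurable [set x | c <= h x].
Proof.
move=> mh; have := mh measurableT _ (measurable_itv `[c, +oo[).
by rewrite setTI; congr measurable; apply/seteqP; split => x /=;
  rewrite in_itv /= andbT.
Qed.

End measurable_real.

Section integral_mul_indic.
Local Open Scope ereal_scope.
Context {d} {T : measurableType d} {R : realType}.
Implicit Types (Y : T -> R) (A B : set T).

Lemma measurable_fun_mul_indic Y A : measurable_fun setT Y -> measurable A ->
  measurable_fun setT (fun x => (Y x * \1_A x)%:E).
Proof.
by move=> mY mA; apply/measurable_EFinP/measurable_funM => //;
  exact: measurable_indic.
Qed.

Lemma integral_scale_eq (mu : {measure set T -> \bar R}) (g Q : R) Y :
  (0 < Q)%R -> measurable_fun setT Y -> (forall x, 0 <= Y x)%R ->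
  \int[mu]_x (g * Y x)%:E = Q%:E ->
  (0 < g)%R /\ \int[mu]_x (Y x)%:E = (Q / g)%:E.
Proof.
move=> Q_gt0 mY Y0 intgY.
have mYE : measurable_fun setT (fun x => (Y x)%:E) by exact/measurable_EFinP.
have g_gt0 : (0 < g)%R.
  rewrite ltNge; apply/negP => g_le0.
  suff : \int[mu]_x (g * Y x)%:E <= 0 by rewrite intgY lee_fin leNgt Q_gt0.
  have gY_ge0 x : [set: T] x -> 0 <= ((- g) * Y x)%:E.
    by move=> _; rewrite lee_fin mulr_ge0 ?oppr_ge0.
  rewrite (eq_integral (fun x => - ((- g) * Y x)%:E)) => [|x _]; last first.
    by rewrite -EFinN mulNr opprK.
  rewrite integral_ge0N; last exact: gY_ge0.
  by rewrite oppe_le0; apply: integral_ge0.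
split => //; rewrite mulrC EFinM -intgY -ge0_integralZl_EFin ?invr_ge0 ?ltW//.
- by apply: eq_integral => x _; rewrite -EFinM mulrA mulVf ?mul1r ?gt_eqF.
- by move=> x _; rewrite lee_fin mulr_ge0 ?(ltW g_gt0).
- by apply/measurable_EFinP/measurable_funM.
Qed.

Lemma integral_mul_indic_conull (mu : {measure set T -> \bar R}) Y B :
  measurable_fun setT Y -> measurable B -> mu (~` B) = 0 ->
  \int[mu]_x (Y x * \1_B x)%:E = \int[mu]_x (Y x)%:E.
Proof.
move=> mY mB muBC0; apply: ae_eq_integral => //.
- exact: measurable_fun_mul_indic.
- exact/measurable_EFinP.
exists (~` B); split => [|//|x /= ]; first exact: measurableC.
by apply: contra_not => Bx _; rewrite indicE mem_set ?mulr1.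
Qed.

Lemma integral_mul_indic_le_of_sublevel (mu : {finite_measure set T -> \bar R})
    Y (k : R) A B :
  measurable_fun setT Y -> (forall x, 0 <= Y x)%R -> (0 <= k)%R ->
  measurable A -> measurable B -> mu A = mu B ->
  (forall x, A x -> Y x <= k)%R -> (forall x, ~ A x -> k <= Y x)%R ->
  \int[mu]_x (Y x * \1_A x)%:E <= \int[mu]_x (Y x * \1_B x)%:E.
Proof.
move=> mY Y0 k0 mA mB muAB YA YnA.
have YC_ge0 (C : set T) x : 0 <= (Y x * \1_C x)%:E.
  by rewrite lee_fin mulr_ge0 ?indic_ge0.
have kC_ge0 (C : set T) x : 0 <= (k * \1_C x)%:E.
  by rewrite lee_fin mulr_ge0 ?indic_ge0.
have int_kC (C : set T) :
    measurable C -> \int[mu]_x (k * \1_C x)%:E = k%:E * mu C.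
  move=> mC; rewrite (eq_integral (fun x => k%:E * (\1_C x)%:E)) => [|x _];
    last by rewrite EFinM.
  by rewrite ge0_integralZl_EFin ?integral_indic ?setIT//;
    exact/measurable_EFinP/measurable_indic.
have pointwise x :
    (Y x * \1_A x + k * \1_B x <= Y x * \1_B x + k * \1_A x)%R.
  rewrite !indicE.
  have [Ax|nAx] := boolP (x \in A); have [Bx|nBx] := boolP (x \in B);
    rewrite ?mulr1 ?mulr0 ?addr0 ?add0r //.
  - exact/YA/set_mem.
  - by apply: YnA; apply: contraNnot nAx; exact: mem_set.
have mYC (C : set T) : measurable C ->
    measurable_fun setT (fun x => (Y x * \1_C x)%:E).
  exact: measurable_fun_mul_indic.
have mkC (C : set T) : measurable C ->
    measurable_fun setT (fun x => (k * \1_C x)%:E).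
  exact/measurable_fun_mul_indic/measurable_cst.
have : \int[mu]_x ((Y x * \1_A x)%:E + (k * \1_B x)%:E) <=
       \int[mu]_x ((Y x * \1_B x)%:E + (k * \1_A x)%:E).
  apply: ge0_le_integral => //.
  - by move=> x _; exact: adde_ge0.
  - exact: emeasurable_funD (mYC _ mA) (mkC _ mB).
  - exact: emeasurable_funD (mYC _ mB) (mkC _ mA).
  - by move=> x _; rewrite -!EFinD lee_fin.
rewrite !ge0_integralD ?int_kC ?muAB//; try by [apply: mYC | apply: mkC].
by rewrite leeD2rE// fin_numM// fin_num_measure.
Qed.

End integral_mul_indic.

Section indep_integral.
Local Open Scope ereal_scope.
Context {d} {T : measurableType d} {R : realType} (P : probability T R).
Variables (X Z : {RV P >-> R}).
Hypotheses (XZ_indep : indep_RV P X Z) (Z_ge0 : forall x, (0 <= Z x)%R).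

Lemma indep_integral_mul (g : R -> R) :
  measurable_fun setT g -> (forall z, 0 <= g z)%R ->
  \int[P]_x (Z x * g (X x))%:E = 'E_P[Z] * \int[P]_x (g (X x))%:E.
Proof.
move=> mg g0.
pose h (z : R * R) := (`|z.2| * g z.1)%:E.
have mh : measurable_fun setT h.
  apply/measurable_EFinP/measurable_funM.
    exact: measurableT_comp measurable_snd.
  exact: measurableT_comp measurable_fst.
have h0 z : 0 <= h z by rewrite lee_fin mulr_ge0.
have mXZ : measurable_fun setT (fun x => (X x, Z x)).
  by apply: measurable_fun_pair; exact: measurable_funPT.
have EZ : \int[distribution P Z]_y `|y|%:E = 'E_P[Z].
  rewrite ge0_integral_distribution//; last first.
    by apply/measurable_EFinP; exact: normr_measurable.
  by rewrite expectation_def; apply: eq_integral => x _ /=; rewrite ger0_norm.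
transitivity (\int[P]_x (h \o (fun x => (X x, Z x))) x).
  by apply: eq_integral => x _; rewrite /h /= ger0_norm.
have := ge0_integral_pushforward mXZ P measurableT mh (fun z _ => h0 z).
rewrite preimage_setT => <-.
rewrite (eq_measure_integral (distribution P X \x distribution P Z));
  last first.
  by move=> A mA _; apply/esym; apply: product_measure_unique.
rewrite fubini_tonelli1 // /fubini_F.
transitivity (\int[distribution P X]_x ('E_P[Z] * (g x)%:E)).
  apply: eq_integral => x _.
  rewrite /h /= -EZ muleC -ge0_integralZl_EFin //.
    by apply: eq_integral => y _; rewrite -EFinM mulrC.
  by apply/measurable_EFinP; exact: normr_measurable.
rewrite ge0_integralZl //.
- by rewrite ge0_integral_distribution //; exact/measurable_EFinP.
- exact/measurable_EFinP.
- by move=> x _; rewrite lee_fin.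
- by rewrite -EZ integral_ge0.
Qed.

End indep_integral.

(* [gamma * tci_power f c theta] is the transmit power [q] of truncated channel
   inversion with effective gain [f / c], cut-off [theta] and received SNR
   [gamma]: [c = 1 + I] in the AIP case and [c = 1 + Gamma] in the PIP case. *)
Definition tci_power {T : Type} {R : realType} (f c : T -> R) (theta : R)
  (x : T) : R := c x / f x * \1_[set y | theta <= f y / c y] x.

Section truncated_channel_inversion.
Context {d} {T : measurableType d} {R : realType} {P : probability T R}.
Context {f I : {RV P >-> R}} {Gamma : R}.
Hypotheses (f_gt0 : forall x, 0 < f x) (I_ge0 : forall x, 0 <= I x).
Hypotheses (fI_indep : indep_RV P f I) (EI : ('E_P[I] = Gamma%:E)%E).

Let mf : measurable_fun setT f := measurable_funPT f.
Let mI : measurable_fun setT I := measurable_funPT I.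

Let Gamma_ge0 : 0 <= Gamma.
Proof. by rewrite -lee_fin -EI expectation_ge0. Qed.

Lemma measurable_tci_power (c : T -> R) theta :
  measurable_fun setT c -> (forall x, 0 < c x) ->
  measurable_fun setT (tci_power f c theta).
Proof.
move=> mc c_gt0.
have mfV : measurable_fun setT (fun x => (f x)^-1).
  exact: measurable_funV_gt0.
apply: measurable_funM; first exact: measurable_funM.
apply/measurable_indic/measurable_ge_set/measurable_funM => //.
exact: measurable_funV_gt0.
Qed.

Lemma tci_power_ge0 (c : T -> R) theta x : (forall x, 0 <= c x) ->
  0 <= tci_power f c theta x.
Proof.
by move=> c_ge0; rewrite mulr_ge0 ?indic_ge0 ?divr_ge0 ?(ltW (f_gt0 x)).
Qed.

Lemma integral_indep_replace_mean (B : set R) : measurable B ->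
  (\int[P]_x ((1 + I x) / f x * \1_(f @^-1` B) x)%:E =
   \int[P]_x ((1 + Gamma) / f x * \1_(f @^-1` B) x)%:E)%E.
Proof.
move=> mB.
(* [expR (- ln z)] is a measurable function equal to [z^-1] for [z > 0]. *)
pose g z := expR (- ln z) * \1_B z.
have mg : measurable_fun setT g.
  apply: measurable_funM; first exact: measurable_expRNln.
  exact: measurable_indic.
have g_ge0 z : 0 <= g z by rewrite mulr_ge0 ?expR_ge0 ?indic_ge0.
have gf x : (f x)^-1 * \1_(f @^-1` B) x = g (f x) by rewrite /g expRNln.
have mgf : measurable_fun setT (fun x => (g (f x))%:E).
  exact/measurable_EFinP/(measurableT_comp mg mf).
transitivity (\int[P]_x ((g (f x))%:E + (I x * g (f x))%:E))%E.
  by apply: eq_integral => x _; rewrite -mulrA gf mulrDl mul1r EFinD.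
rewrite ge0_integralD //; first last.
- by apply/measurable_EFinP/measurable_funM => //; exact: measurableT_comp.
- by move=> x _; rewrite lee_fin mulr_ge0.
- by move=> x _; rewrite lee_fin.
transitivity ((1 + Gamma)%:E * \int[P]_x (g (f x))%:E)%E.
  by rewrite indep_integral_mul // EI EFinD ge0_muleDl ?lee_fin ?mul1e.
rewrite -ge0_integralZl_EFin ?addr_ge0 //; last by move=> x _; rewrite lee_fin.
by apply: eq_integral => x _; rewrite -EFinM -mulrA gf.
Qed.

Lemma integral_aip_tci_power_le (theta_a theta_p : R) : 0 <= theta_a ->
  P [set x | f x / (1 + I x) < theta_a] =
    P [set x | f x / (1 + Gamma) < theta_p] ->
  (\int[P]_x (tci_power f (fun x => 1 + I x) theta_a x)%:E <=
   \int[P]_x (tci_power f (fun=> 1 + Gamma) theta_p x)%:E)%E.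
Proof.
move=> theta_a_ge0 P_outage.
have I1_gt0 x : 0 < 1 + I x by rewrite ltr_pwDl.
have mI1 : measurable_fun setT (fun x => 1 + I x) by exact: measurable_funD.
pose Y x := (1 + I x) / f x.
have mY : measurable_fun setT Y.
  by apply: measurable_funM => //; exact: measurable_funV_gt0.
have Y_ge0 x : 0 <= Y x by rewrite divr_ge0 ?ltW.
pose A := [set x | theta_a <= f x / (1 + I x)].
pose B := [set z : R | theta_p <= z / (1 + Gamma)].
have mA : measurable A.
  apply/measurable_ge_set/measurable_funM => //; exact: measurable_funV_gt0.
have mB : measurable B by apply/measurable_ge_set/measurable_funM.
have mfB : measurable (f @^-1` B) by rewrite -[_ @^-1` _]setTI; exact: mf.
have PAC_PBC : P (~` A) = P (~` (f @^-1` B)).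
  have -> : ~` A = [set x | f x / (1 + I x) < theta_a] by exact: setC_le_lt.
  have -> : ~` (f @^-1` B) = [set x | f x / (1 + Gamma) < theta_p].
    exact: setC_le_lt.
  exact: P_outage.
have PA_PB : P A = P (f @^-1` B).
  rewrite -[A]setCK -[f @^-1` B]setCK (probability_setC P (measurableC mA)).
  by rewrite (probability_setC P (measurableC mfB)) PAC_PBC.
rewrite /tci_power -(integral_indep_replace_mean _ mB).
have [theta_a0|theta_a_ne0] := eqVneq theta_a 0.
  have PAC0 : P (~` A) = 0%E.
    suff -> : ~` A = set0 by rewrite measure0.
    by rewrite -subset0 => x /=; apply; rewrite /A /= theta_a0 divr_ge0 ?ltW.
  rewrite (integral_mul_indic_conull _ _ _ mY mfB); last first.
    exact: etrans (esym PAC_PBC) PAC0.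
  by rewrite -(integral_mul_indic_conull _ _ _ mY mA PAC0).
have theta_a_gt0 : 0 < theta_a by rewrite lt0r theta_a_ne0.
have theta_aV_ge0 : 0 <= theta_a^-1 by rewrite invr_ge0.
have ratio_gt0 x : 0 < f x / (1 + I x) by rewrite divr_gt0.
apply: (integral_mul_indic_le_of_sublevel _ _ theta_a^-1) => //.
- by move=> x Ax; rewrite -invf_div lef_pV2 ?posrE.
- move=> x nAx; rewrite -invf_div lef_pV2 ?posrE //.
  by apply: ltW; rewrite ltNge; exact/negP.
Qed.

End truncated_channel_inversion.

Theorem theorem4p5 (d : measure_display) (T : measurableType d) (R : realType)
  (P : probability T R) (f I : {RV P >-> R}) (Q Gamma eps0 : R)
  (theta_a theta_p gamma_a gamma_p : R) :
  0 < Q -> 0 < Gamma ->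
  (forall x, 0 < f x) -> has_continuous_pdf P f ->
  (forall x, 0 <= I x) -> indep_RV P f I ->
  ('E_P[I] = Gamma%:E)%E ->
  0 <= eps0 < 1 ->
  0 <= theta_a ->
  P [set x | f x / (1 + I x) < theta_a] = eps0%:E ->
  0 <= theta_p ->
  P [set x | f x / (1 + Gamma) < theta_p] = eps0%:E ->
  (\int[P]_x (gamma_a * (1 + I x) / f x
        * \1_[set y | theta_a <= f y / (1 + I y)] x)%:E)%E = Q%:E ->
  (\int[P]_x (gamma_p * (1 + Gamma) / f x
        * \1_[set y | theta_p <= f y / (1 + Gamma)] x)%:E)%E = Q%:E ->
  ln (1 + gamma_p) <= ln (1 + gamma_a).
Proof.
(* The density of [f] and the range of [eps0] only make the thresholds exist;
   the comparison needs just that the two outage probabilities coincide. *)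
move=> Q_gt0 Gamma_gt0 f_gt0 _ I_ge0 fI_indep EI _ theta_a_ge0 P_out_a _ P_out_p
  power_a power_p.
have mI1 : measurable_fun setT (fun x => 1 + I x).
  exact/measurable_funD/measurable_funPT.
have [gamma_a_gt0 int_a] : 0 < gamma_a /\
    (\int[P]_x (tci_power f (fun x => 1 + I x) theta_a x)%:E =
     (Q / gamma_a)%:E)%E.
  apply: integral_scale_eq => //.
  - by apply: measurable_tci_power => // x; rewrite ltr_pwDl.
  - by move=> x; apply: tci_power_ge0 => // y; rewrite addr_ge0.
  - by rewrite -power_a; apply: eq_integral => x _; rewrite /tci_power !mulrA.
have [gamma_p_gt0 int_p] : 0 < gamma_p /\
    (\int[P]_x (tci_power f (fun=> 1 + Gamma) theta_p x)%:E =
     (Q / gamma_p)%:E)%E.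
  apply: integral_scale_eq => //.
  - by apply: measurable_tci_power => // x; rewrite addr_gt0.
  - by move=> x; apply: tci_power_ge0 => // y; rewrite addr_ge0 ?ltW.
  - by rewrite -power_p; apply: eq_integral => x _; rewrite /tci_power !mulrA.
have : ((Q / gamma_a)%:E <= (Q / gamma_p)%:E)%E.
  rewrite -int_a -int_p; apply: integral_aip_tci_power_le => //.
  by rewrite P_out_a P_out_p.
rewrite lee_fin ler_pM2l // lef_pV2 ?posrE // => gamma_le.
by rewrite ler_ln ?posrE ?lerD2l ?addr_gt0.
Qed.
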